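(* Let $R$ be an NJ-symmetric ring. Then $R/J(R)$ is reduced (has no nonzero nilpotent elements) if either (1) $R$ is semiperiodic, or (2) $R$ is left SF.
   Context: Rings are associative with identity. $N(R)$ is the set of nilpotent elements, $J(R)$ the Jacobson radical, $Z(R)$ the center. $R$ is NJ-symmetric if for all $a,b,c\in R$, $abc\in N(R)$ implies $bac\in J(R)$. $R$ is semiperiodic if for each $a\in R\setminus (J(R)\cup Z(R))$ there exist positive integers $p,q$ of opposite parity with $a^q-a^p\in N(R)$. $R$ is left SF if every simple left $R$-module is flat. *)

From HB Require Import structures.
From mathcomp Require Import all_boot all_order all_algebra.
Set Implicit Arguments. Unset Strict Implicit. Unset Printing Implicit Defensive.
Import Order.TTheory GRing.Theory Num.Theory.
Local Open Scope ring_scope.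

Section RingNotions.
Variable R : pzRingType.

Definition nilpotent_el (x : R) : Prop := exists n : nat, x ^+ n = 0.

Definition central (x : R) : Prop := forall y : R, x * y = y * x.

Definition left_ideal (I : R -> Prop) : Prop :=
  [/\ I 0, (forall x y, I x -> I y -> I (x + y)), (forall x, I x -> I (- x))
    & (forall r x, I x -> I (r * x))].

Definition maximal_left_ideal (I : R -> Prop) : Prop :=
  [/\ left_ideal I, ~ I 1 &
      forall K : R -> Prop, left_ideal K -> ~ K 1 ->
        (forall x, I x -> K x) -> forall x, K x -> I x].

Definition jacobson (x : R) : Prop :=
  forall I : R -> Prop, maximal_left_ideal I -> I x.

Definition NJ_symmetric : Prop :=
  forall a b c : R, nilpotent_el (a * b * c) -> jacobson (b * a * c).

Definition semiperiodic : Prop :=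
  forall a : R, ~ jacobson a -> ~ central a ->
    exists p q : nat, [/\ (0 < p)%N, (0 < q)%N, odd p != odd q
                        & nilpotent_el (a ^+ q - a ^+ p)].

(** R/J(R) is reduced: a coset x + J(R) with (x + J(R))^n = 0, i.e. x^n in J(R),
    is zero, i.e. x in J(R). *)
Definition reduced_mod_jacobson : Prop :=
  forall (x : R) (n : nat), jacobson (x ^+ n) -> jacobson x.

Definition submodule (M : lmodType R) (S : M -> Prop) : Prop :=
  [/\ S 0, (forall u v, S u -> S v -> S (u + v)) & (forall (r : R) u, S u -> S (r *: u))].

Definition simple_lmod (M : lmodType R) : Prop :=
  (exists m : M, m != 0) /\
  forall S : M -> Prop, submodule S -> (forall m, S m -> m = 0) \/ (forall m, S m).

(** Tensor product A (x)_R M of a right R-module A (= left R^c-module) and a left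
    R-module M, presented as the free abelian group on A * M modulo the
    balanced-bilinearity relations.  Formal sums are lists of (integer
    coefficient, generator); a formal sum represents 0 in A (x)_R M iff its
    coefficient function is an integer combination of relators. *)
Section Tensor.
Variables (A : lmodType R^c) (M : lmodType R).

Definition fsum := seq (int * (A * M)).

Definition fcoef (s : fsum) (p : A * M) : int :=
  \sum_(e <- s | e.2 == p) e.1.

Inductive trel :=
  | RelAddL of A & A & M
  | RelAddR of A & M & M
  | RelBal of A & R & M.

(* right action a.r is written r *: a in the R^c-module A *)
Definition relator (g : trel) : fsum :=
  match g with
  | RelAddL a a' m => [:: ((1 : int), (a + a', m)); ((-1 : int), (a, m)); ((-1 : int), (a', m))]
  | RelAddR a m m' => [:: ((1 : int), (a, m + m')); ((-1 : int), (a, m)); ((-1 : int), (a, m'))]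
  | RelBal a r m => [:: ((1 : int), ((r : R^c) *: a, m)); ((-1 : int), (a, r *: m))]
  end.

Definition tensor_zero (s : fsum) : Prop :=
  exists gs : seq (int * trel),
    forall p, fcoef s p = \sum_(g <- gs) g.1 * fcoef (relator g.2) p.

End Tensor.

Definition map_fsum (A B : lmodType R^c) (M : lmodType R) (f : A -> B)
  (s : fsum A M) : fsum B M :=
  map (fun e => (e.1, (f e.2.1, e.2.2))) s.

(** M is flat: - (x)_R M preserves injectivity of right-module maps, i.e.
    f (x) 1 : A (x) M -> B (x) M has trivial kernel for every injective f. *)
Definition flat_lmod (M : lmodType R) : Prop :=
  forall (A B : lmodType R^c) (f : {linear A -> B}), injective f ->
    forall s : fsum A M, tensor_zero (map_fsum f s) -> tensor_zero s.

Definition left_SF : Prop :=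
  forall M : lmodType R, simple_lmod M -> flat_lmod M.

End RingNotions.

(* Both conditions are used only through the implication a^2 in J(R) -> a in J(R),
   which yields reducedness of R/J(R) by halving the exponent; NJ-symmetry with
   a = c = 1 gives N(R) <= J(R).
   Semiperiodic case: a central a lies in every maximal left ideal I, since
   1 = i + r a gives a = a i + r a^2.  Otherwise b = 1 + a and -b are neither in
   J(R) nor central, and (1 + a)^k = 1 + k a mod J(R).  Semiperiodicity of b gives
   (q - p) a in J(R) with q - p odd, and that of -b gives b^q' + b^p' in J(R),
   whence 2 a in J(R); so a in J(R).
   Left SF case: if a is outside a maximal left ideal I, then I : a is a maximal
   left ideal containing a.  Flatness of R/(I : a), tested on the embedding
   R/r.ann(a) = aR into R, gives a = a y with y in I : a; then a (1 - y) = 0 is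
   nilpotent, NJ-symmetry puts (1 - y) a in J(R) <= I, and 1 lies in I : a. *)

From HB Require Import structures.
From mathcomp Require Import all_boot all_order all_algebra.
From mathcomp Require Import zify.
From Stdlib Require Import Classical ClassicalEpsilon FunctionalExtensionality PropExtensionality.
Set Implicit Arguments. Unset Strict Implicit. Unset Printing Implicit Defensive.
Import GRing.Theory.
Local Open Scope ring_scope.

Record submod (S : pzRingType) (V : lmodType S) := Submod {
  submod_pred :> V -> Prop;
  submodP : submodule submod_pred }.

Section QuotientModule.
Variables (S : pzRingType) (V : lmodType S) (P : submod V).

Lemma submod0 : P 0. Proof. by case: (submodP P). Qed.
Lemma submodD x y : P x -> P y -> P (x + y). Proof. by case: (submodP P) => _ + _; apply. Qed.
Lemma submodZ r x : P x -> P (r *: x). Proof. by case: (submodP P) => _ _; apply. Qed.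
Lemma submodN x : P x -> P (- x). Proof. by move=> /(submodZ (-1)); rewrite scaleN1r. Qed.

(* Cosets are represented by canonical representatives chosen with Hilbert's epsilon. *)
Definition coset_repr (x : V) : V := epsilon (inhabits 0) (fun y => P (x - y)).

Lemma coset_reprP x : P (x - coset_repr x).
Proof.
by apply: (epsilon_spec (inhabits 0) (fun y => P (x - y))); exists x; rewrite subrr; apply: submod0.
Qed.

Lemma eq_coset_repr x y : P (x - y) -> coset_repr x = coset_repr y.
Proof.
move=> Pxy; rewrite /coset_repr; congr epsilon; apply: functional_extensionality => z.
apply: propositional_extensionality; split=> Pz.
  by have := submodD (submodN Pxy) Pz; rewrite opprB addrA subrK.
by have := submodD Pxy Pz; rewrite addrA subrK.
Qed.

Lemma coset_repr_id x : coset_repr (coset_repr x) = coset_repr x.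
Proof. by apply: eq_coset_repr; have := submodN (coset_reprP x); rewrite opprB. Qed.

Record quotmod := Quotmod { quotmod_val : V; _ : coset_repr quotmod_val == quotmod_val }.
HB.instance Definition _ := [isSub for quotmod_val].
HB.instance Definition _ := [Choice of quotmod by <:].

Definition qproj (x : V) : quotmod := Quotmod (introT eqP (coset_repr_id x)).

Lemma qproj_val u : qproj (val u) = u.
Proof. by apply: val_inj; case: u => x /= /eqP. Qed.

Lemma qprojP x y : qproj x = qproj y <-> P (x - y).
Proof.
split=> [/(congr1 val) /= exy | Pxy]; last exact/val_inj/eq_coset_repr.
have := submodD (coset_reprP x) (submodN (coset_reprP y)).
by rewrite exy opprB addrA subrK.
Qed.

Lemma val_qprojB x : P (val (qproj x) - x).
Proof. by have := submodN (coset_reprP x); rewrite opprB. Qed.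

Lemma quotmodW (Q : quotmod -> Prop) : (forall x, Q (qproj x)) -> forall u, Q u.
Proof. by move=> Qproj u; rewrite -[u]qproj_val. Qed.

Definition qzero := qproj 0.
Definition qadd (u v : quotmod) := qproj (val u + val v).
Definition qopp (u : quotmod) := qproj (- val u).
Definition qscale r (u : quotmod) := qproj (r *: val u).

Lemma qaddE x y : qadd (qproj x) (qproj y) = qproj (x + y).
Proof.
apply/qprojP; have := submodD (val_qprojB x) (val_qprojB y).
by rewrite opprD addrACA.
Qed.

Lemma qoppE x : qopp (qproj x) = qproj (- x).
Proof. by apply/qprojP; have := submodN (val_qprojB x); rewrite !opprB opprK addrC. Qed.

Lemma qscaleE r x : qscale r (qproj x) = qproj (r *: x).
Proof. by apply/qprojP; have := submodZ r (val_qprojB x); rewrite scalerBr. Qed.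

Lemma qaddA : associative qadd.
Proof. by elim/quotmodW=> x; elim/quotmodW=> y; elim/quotmodW=> z; rewrite !qaddE addrA. Qed.
Lemma qaddC : commutative qadd.
Proof. by elim/quotmodW=> x; elim/quotmodW=> y; rewrite !qaddE addrC. Qed.
Lemma qadd0 : left_id qzero qadd.
Proof. by elim/quotmodW=> x; rewrite qaddE add0r. Qed.
Lemma qaddN : left_inverse qzero qopp qadd.
Proof. by elim/quotmodW=> x; rewrite qoppE qaddE addNr. Qed.

HB.instance Definition _ := GRing.isZmodule.Build quotmod qaddA qaddC qadd0 qaddN.

Lemma qscaleA a b u : qscale a (qscale b u) = qscale (a * b) u.
Proof. by elim/quotmodW: u => x; rewrite !qscaleE scalerA. Qed.
Lemma qscale1 : left_id 1 qscale.
Proof. by elim/quotmodW=> x; rewrite qscaleE scale1r. Qed.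
Lemma qscaleDr : right_distributive qscale qadd.
Proof.
by move=> a; elim/quotmodW=> x; elim/quotmodW=> y; rewrite qaddE !qscaleE qaddE scalerDr.
Qed.
Lemma qscaleDl u : {morph qscale^~ u : a b / a + b >-> qadd a b}.
Proof. by elim/quotmodW: u => x a b; rewrite !qscaleE qaddE scalerDl. Qed.

HB.instance Definition _ :=
  GRing.Zmodule_isLmodule.Build S quotmod qscaleA qscale1 qscaleDr qscaleDl.

Lemma qprojD x y : qproj (x + y) = qproj x + qproj y. Proof. by rewrite -qaddE. Qed.
Lemma qprojZ r x : qproj (r *: x) = r *: qproj x. Proof. by rewrite -qscaleE. Qed.
Lemma qproj_eq0 x : qproj x = 0 <-> P x.
Proof. by have := qprojP x 0; rewrite subr0. Qed.

Lemma val_quotmodD (u v : quotmod) : P (val (u + v) - (val u + val v)).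
Proof. by have := val_qprojB (val u + val v); rewrite qprojD !qproj_val. Qed.
Lemma val_quotmodZ r (u : quotmod) : P (val (r *: u) - r *: val u).
Proof. by have := val_qprojB (r *: val u); rewrite qprojZ qproj_val. Qed.

End QuotientModule.

Section LeftIdeals.
Variable R : pzRingType.
Implicit Types (I K : R -> Prop) (x y a r : R).

Lemma lideal0 I : left_ideal I -> I 0. Proof. by case. Qed.
Lemma lidealD I x y : left_ideal I -> I x -> I y -> I (x + y). Proof. by case=> _ + _ _; apply. Qed.
Lemma lidealN I x : left_ideal I -> I x -> I (- x). Proof. by case=> _ _ + _; apply. Qed.
Lemma lidealM I r x : left_ideal I -> I x -> I (r * x). Proof. by case=> _ _ _; apply. Qed.
Lemma lidealB I x y : left_ideal I -> I x -> I y -> I (x - y).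
Proof. by move=> hI Ix Iy; apply/(lidealD hI)/(lidealN hI). Qed.

Definition ideal_add I K z := exists x y, [/\ I x, K y & z = x + y].
Definition mulr_image K r z := exists2 x, K x & z = x * r.
Definition colon I r x := I (x * r).

Lemma left_ideal_add I K : left_ideal I -> left_ideal K -> left_ideal (ideal_add I K).
Proof.
move=> hI hK; split.
- by exists 0, 0; rewrite addr0; split; [apply: lideal0..|].
- move=> _ _ [x [y [Ix Ky ->]]] [x' [y' [Ix' Ky' ->]]].
  by exists (x + x'), (y + y'); rewrite addrACA; split; [apply: lidealD..|].
- move=> _ [x [y [Ix Ky ->]]].
  by exists (- x), (- y); rewrite opprD; split; [apply: lidealN..|].
- move=> r _ [x [y [Ix Ky ->]]].
  by exists (r * x), (r * y); rewrite mulrDr; split; [apply: lidealM..|].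
Qed.

Lemma left_ideal_mulr K r : left_ideal K -> left_ideal (mulr_image K r).
Proof.
move=> hK; split.
- by exists 0; [apply: lideal0 | rewrite mul0r].
- by move=> _ _ [x Kx ->] [y Ky ->]; exists (x + y); [apply: lidealD | rewrite mulrDl].
- by move=> _ [x Kx ->]; exists (- x); [apply: lidealN | rewrite mulNr].
- by move=> s _ [x Kx ->]; exists (s * x); [apply: lidealM | rewrite mulrA].
Qed.

Lemma left_ideal_colon I r : left_ideal I -> left_ideal (colon I r).
Proof.
rewrite /colon => hI; split.
- by rewrite mul0r; apply: lideal0.
- by move=> x y Ix Iy; rewrite mulrDl; apply: lidealD.
- by move=> x Ix; rewrite mulNr; apply: lidealN.
- by move=> s x Ix; rewrite -mulrA; apply: lidealM.
Qed.

Lemma maximal_left_idealW I : maximal_left_ideal I -> left_ideal I.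
Proof. by case. Qed.

Lemma maximal_left_ideal_full I K x : maximal_left_ideal I -> left_ideal K ->
  (forall y, I y -> K y) -> K x -> ~ I x -> K 1.
Proof. by case=> _ _ Imax hK IK Kx Ix; apply: NNPP => K1; apply/Ix/(Imax K). Qed.

Lemma maximal_left_ideal_gen I a : maximal_left_ideal I -> ~ I a ->
  exists i r, I i /\ 1 = i + r * a.
Proof.
move=> hI Ia; have [hIl _ _] := hI.
have hRa : left_ideal (mulr_image (fun=> True) a).
  by apply: left_ideal_mulr; split.
have [||i [_ [Ii [r _ ->] e]]] :=
  maximal_left_ideal_full hI (left_ideal_add hIl hRa) _ _ Ia; last by exists i, r.
- by move=> y Iy; exists y, 0; split=> //; [apply: lideal0 | rewrite addr0].
by exists 0, a; split=> //; [apply: lideal0 hIl | exists 1; rewrite ?mul1r | rewrite add0r].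
Qed.

Lemma maximal_left_ideal_colon I r : maximal_left_ideal I -> ~ I r ->
  maximal_left_ideal (colon I r).
Proof.
move=> hI Ir; have [hIl _ _] := hI.
split; [exact: left_ideal_colon | by rewrite /colon mul1r | move=> K hK K1 IK k Kk].
apply: NNPP => Ikr.
(* 1 = x r + i with x in K and i in I, hence r = (r x) r + r i and 1 - r x lies in I : r. *)
have [||_ [i [[x Kx ->] Ii e]]] :=
  maximal_left_ideal_full hI (left_ideal_add (left_ideal_mulr r hK) hIl) _ _ Ikr.
- by move=> y Iy; exists 0, y; split=> //; [exists 0; rewrite ?mul0r; case: hK | rewrite add0r].
- by exists (k * r), 0; split=> //; [exists k | apply: lideal0 | rewrite addr0].
apply: K1; have [_ KD _ KM] := hK.
have Krx : K (r * x) by apply: KM.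
have : colon I r (1 - r * x).
  by rewrite /colon mulrBl mul1r -mulrA -{1}[r]mulr1 {1}e mulrDr addrAC subrr add0r; apply: lidealM.
by move/IK => /(KD _ _ ^~ Krx); rewrite subrK.
Qed.

End LeftIdeals.

Section Jacobson.
Variable R : pzRingType.
Implicit Types (x y a r : R).

Lemma jacobson0 : jacobson (0 : R).
Proof. by move=> I [hI _ _]; apply: lideal0. Qed.
Lemma jacobsonD x y : jacobson x -> jacobson y -> jacobson (x + y).
Proof. by move=> Jx Jy I hI; have [hIl _ _] := hI; apply: lidealD; [|apply: Jx|apply: Jy]. Qed.
Lemma jacobsonN x : jacobson x -> jacobson (- x).
Proof. by move=> Jx I hI; have [hIl _ _] := hI; apply: lidealN; [|apply: Jx]. Qed.
Lemma jacobsonB x y : jacobson x -> jacobson y -> jacobson (x - y).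
Proof. by move=> Jx Jy; apply: jacobsonD Jx (jacobsonN Jy). Qed.
Lemma jacobsonBr x y : jacobson (x - y) -> jacobson x -> jacobson y.
Proof. by move=> Jxy Jx; rewrite -(subKr x y); apply: jacobsonB. Qed.
Lemma jacobsonMl r x : jacobson x -> jacobson (r * x).
Proof. by move=> Jx I hI; have [hIl _ _] := hI; apply: lidealM; [|apply: Jx]. Qed.
Lemma jacobsonMn x n : jacobson x -> jacobson (x *+ n).
Proof.
move=> Jx; elim: n => [|n IHn]; first by rewrite mulr0n; apply: jacobson0.
by rewrite mulrS; apply: jacobsonD.
Qed.

(* If r lies in I then r - 1 does not, and x r = x (r - 1) + x. *)
Lemma jacobsonMr x r : jacobson x -> jacobson (x * r).
Proof.
move=> Jx I hI; have [hIl I1 _] := hI.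
have [Ir|Ir] := classic (I r); last exact: Jx _ (maximal_left_ideal_colon hI Ir).
have Ir1 : ~ I (r - 1).
  by move=> Ir1; apply: I1; have := lidealB hIl Ir Ir1; rewrite opprB addrC subrK.
have := lidealD hIl (Jx _ (maximal_left_ideal_colon hI Ir1)) (Jx _ hI).
by rewrite /colon mulrBr mulr1 subrK.
Qed.

Lemma jacobson_central_sq a : central a -> jacobson (a * a) -> jacobson a.
Proof.
move=> ca Jaa I hI; have [hIl _ _] := hI; apply: NNPP => Ia.
have [i [r [Ii e]]] := maximal_left_ideal_gen hI Ia; apply: Ia.
have -> : a = a * i + r * (a * a) by rewrite mulrA -(ca r) -mulrA -mulrDr -e mulr1.
by apply: lidealD => //; apply: lidealM => //; apply: Jaa.
Qed.

Lemma nilpotent_jacobson : NJ_symmetric R -> forall x, nilpotent_el x -> jacobson x.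
Proof. by move=> hNJ x; have := hNJ 1 x 1; rewrite !mulr1 mul1r. Qed.

Lemma reduced_mod_jacobsonP :
  (forall a, jacobson (a * a) -> jacobson a) -> reduced_mod_jacobson R.
Proof.
move=> Jsq x n; elim/ltn_ind: n => -[|[|n]] IHn Jxn.
- by rewrite -[x]mulr1; apply: jacobsonMl; rewrite expr0 in Jxn.
- by rewrite expr1 in Jxn.
(* m = ceil((n+2)/2) satisfies m < n + 2 <= 2m *)
set m := (n.+2 - n.+2 %/ 2)%N.
have m_lt : (m < n.+2)%N by rewrite /m; lia.
have m2 : (m + m = (m + m - n.+2) + n.+2)%N by rewrite /m; lia.
by apply: (IHn m m_lt); apply: Jsq; rewrite -exprD m2 exprD; apply: jacobsonMl.
Qed.

End Jacobson.

Section Semiperiodic.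
Variable R : pzRingType.
Implicit Types (a b x y : R).

Lemma jacobson_exp1D a k : jacobson (a * a) -> jacobson ((1 + a) ^+ k - (1 + a *+ k)).
Proof.
move=> Jaa; elim: k => [|k IHk]; first by rewrite expr0 mulr0n addr0 subrr; apply: jacobson0.
have -> : (1 + a) ^+ k.+1 - (1 + a *+ k.+1) =
    ((1 + a) ^+ k - (1 + a *+ k)) * (1 + a) + (a * a) *+ k.
  rewrite exprSr mulrBl -addrA; congr (_ + _).
  by rewrite mulrDl mul1r mulrDr mulr1 -mulrnAl mulrS !addrA [in RHS]opprD subrK.
by apply: jacobsonD; [apply: jacobsonMr | apply: jacobsonMn].
Qed.

Lemma jacobson_exp1D_subr a p q : jacobson (a * a) ->
  jacobson ((1 + a) ^+ q - (1 + a) ^+ p) -> jacobson (a *+ q - a *+ p).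
Proof.
move=> Jaa; apply: jacobsonBr.
have -> : a *+ q - a *+ p = (1 + a *+ q) - (1 + a *+ p) by rewrite opprD addrACA subrr add0r.
set X := _ ^+ q; set Y := _ ^+ p; set A := 1 + _; set B := 1 + _.
have -> : X - Y - (A - B) = (X - A) - (Y - B).
  by rewrite !opprB addrACA [X - A + _]addrACA [- Y - A]addrC.
by apply: jacobsonB; apply: jacobson_exp1D.
Qed.

Lemma jacobson_exp1D_addr a p q : jacobson (a * a) ->
  jacobson ((1 + a) ^+ q + (1 + a) ^+ p) -> jacobson (a *+ 2).
Proof.
move=> Jaa J2; have J1 : jacobson ((1 + a *+ q) + (1 + a *+ p)).
  apply: jacobsonBr J2; rewrite opprD addrACA.
  by apply: jacobsonD; apply: jacobson_exp1D.
apply: jacobsonBr (jacobsonMl a J1).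
have -> : a * (1 + a *+ q + (1 + a *+ p)) - a *+ 2 = (a * a) *+ q + (a * a) *+ p.
  by rewrite !mulrDr !mulr1 !mulrnAr addrACA mulr2n [a + a + _]addrC addrK.
by apply: jacobsonD; apply: jacobsonMn.
Qed.

Lemma exprN_subr_opposite_parity b p q : odd p != odd q ->
  (- b) ^+ q - (- b) ^+ p = (-1) ^+ q * (b ^+ q + b ^+ p).
Proof.
move=> pq; rewrite !(exprNn b).
have -> : (-1) ^+ p = - (-1) ^+ q :> R.
  rewrite -(signr_odd _ p) -(signr_odd _ q).
  by case: (odd p) (odd q) pq => [] [] //= _; rewrite ?expr0 ?expr1 ?opprK.
by rewrite mulNr opprK mulrDr.
Qed.

Lemma jacobson_muln_odd_diff a p q : jacobson (a *+ 2) -> odd p != odd q ->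
  jacobson (a *+ q - a *+ p) -> jacobson a.
Proof.
wlog le_pq : p q / (p <= q)%N.
  move=> wlog J2 pq Jqp; have [le|/ltnW le] := leqP p q; first exact: (wlog p q).
  by apply: (wlog q p) => //; [rewrite eq_sym | rewrite -opprB; apply: jacobsonN].
move=> J2 pq; rewrite -mulrnBr // => Jd.
have odd_d : odd (q - p) by rewrite oddB //; case: (odd p) (odd q) pq => [] [].
have -> : a = a *+ (q - p) - (a *+ 2) *+ (q - p)./2.
  by rewrite -mulrnA -{1}(odd_double_half (q - p)) odd_d mulrS -muln2 mulnC addrK.
by apply: jacobsonB Jd (jacobsonMn _ J2).
Qed.

Lemma semiperiodic_jacobson_sq a : NJ_symmetric R -> semiperiodic R ->
  jacobson (a * a) -> jacobson a.
Proof.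
move=> hNJ hsp Jaa; apply: NNPP => Ja.
have [ca|nca] := classic (central a); first by apply: Ja; apply: jacobson_central_sq.
set b := 1 + a.
have Jb : ~ jacobson b.
  move=> Jb; apply: Ja; apply: (jacobsonBr (x := a * b)); last exact: jacobsonMl.
  by rewrite /b mulrDr mulr1 addrAC subrr add0r.
have cb : ~ central b.
  by move=> cb; apply: nca => y; have := cb y; rewrite /b mulrDl mulrDr mul1r mulr1 => /addrI.
have Jnb : ~ jacobson (- b) by move=> /jacobsonN; rewrite opprK.
have cnb : ~ central (- b).
  by move=> cnb; apply: cb => y; have := cnb y; rewrite mulNr mulrN => /oppr_inj.
have [p [q [_ _ pq Nqp]]] := hsp b Jb cb.
have [p' [q' [_ _ pq' Nqp']]] := hsp (- b) Jnb cnb.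
have := nilpotent_jacobson hNJ Nqp'; rewrite exprN_subr_opposite_parity // => Jqp'.
have Jqp2 : jacobson (b ^+ q' + b ^+ p').
  by rewrite -(signrMK q' (_ + _)); apply: jacobsonMl.
apply: Ja; apply: (jacobson_muln_odd_diff (p := p) (q := q)) => //.
  exact: jacobson_exp1D_addr Jaa Jqp2.
by apply: (jacobson_exp1D_subr Jaa); apply: nilpotent_jacobson.
Qed.

End Semiperiodic.

Section FormalSums.
Variables (R : pzRingType) (A : lmodType R^c) (M : lmodType R) (V : zmodType).
Implicit Types (phi : A * M -> V) (s : fsum A M).

Definition fsum_eval phi s : V := \sum_(e <- s) phi e.2 *~ e.1.

Lemma fsum_eval_coef phi s (U : seq (A * M)) :
  uniq U -> {subset [seq e.2 | e <- s] <= U} ->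
  fsum_eval phi s = \sum_(p <- U) phi p *~ fcoef s p.
Proof.
rewrite /fsum_eval /fcoef => uU; elim: s => [|e s IHs] sU.
  by rewrite big_nil big1 // => p _; rewrite big_nil mulr0z.
rewrite big_cons IHs; last by move=> x sx; apply: sU; rewrite inE sx orbT.
have -> : \sum_(p <- U) phi p *~ (\sum_(e0 <- e :: s | e0.2 == p) e0.1) =
    \sum_(p <- U) ((if e.2 == p then phi p *~ e.1 else 0) +
                   phi p *~ (\sum_(e0 <- s | e0.2 == p) e0.1)).
  by apply: eq_bigr => p _; rewrite big_cons; case: eqP => _; rewrite ?mulrzDr ?add0r.
rewrite big_split /=; congr (_ + _).
have eU : e.2 \in U by apply: sU; rewrite inE eqxx.
by rewrite (bigD1_seq e.2) //= eqxx big1 ?addr0 // => p /negPf ep; rewrite eq_sym ep.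
Qed.

Lemma fsum_eval_lincomb phi s (ts : seq (int * fsum A M)) :
  (forall p, fcoef s p = \sum_(t <- ts) t.1 * fcoef t.2 p) ->
  fsum_eval phi s = \sum_(t <- ts) fsum_eval phi t.2 *~ t.1.
Proof.
move=> coef_s.
set U := undup ([seq e.2 | e <- s] ++ flatten [seq [seq e.2 | e <- t.2] | t <- ts]).
have uU : uniq U := undup_uniq _.
rewrite (fsum_eval_coef phi uU); last by move=> x sx; rewrite mem_undup mem_cat sx.
under eq_bigr do rewrite coef_s mulrz_sumr.
rewrite exchange_big /=; apply: eq_big_seq => t ts_t.
rewrite (fsum_eval_coef phi uU) ?mulrz_suml.
  by apply: eq_bigr => p _; rewrite mulrC mulrzA.
move=> x tx; rewrite mem_undup mem_cat; apply/orP; right.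
by apply/flattenP; exists [seq e.2 | e <- t.2] => //; apply: map_f.
Qed.

Lemma tensor_zero_eval phi s : tensor_zero s ->
  exists gs : seq (int * trel A M),
    fsum_eval phi s = \sum_(g <- gs) fsum_eval phi (relator g.2) *~ g.1.
Proof.
case=> gs coef_s; exists gs.
rewrite (@fsum_eval_lincomb phi s [seq (g.1, relator g.2) | g <- gs]) ?big_map // => p.
by rewrite big_map.
Qed.

Lemma tensor_zero_annihilated (u : A) (r : R) (z : M) :
  r *: z = 0 -> tensor_zero [:: (1%:Z, ((r : R^c) *: u, z))].
Proof.
move=> rz0; exists [:: (1%:Z, RelBal u r z); (-1, RelAddR u 0 0)] => p.
rewrite /fcoef !big_cons !big_nil /= rz0 !addr0.
by case: (_ == p); case: (_ == p).
Qed.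

End FormalSums.

Section RightAnnihilator.
Variables (R : pzRingType) (a : R).

Lemma rann_submodule : submodule (fun x : (R^c)^o => a * (x : R) = 0).
Proof.
split; first exact: mulr0.
  by move=> x y ax ay; rewrite [a * _]mulrDr ax ay addr0.
by move=> r x ax; rewrite [a * _]mulrA ax mul0r.
Qed.

(* R / r.ann(a) as a right R-module, isomorphic to aR through left multiplication by a *)
Definition rann_quot := quotmod (Submod rann_submodule).

Definition lmul_rann (u : rann_quot) : (R^c)^o := a * (val u : R).

Lemma lmul_rann_proj (x : (R^c)^o) : lmul_rann (qproj _ x) = a * (x : R).
Proof.
have := val_qprojB (Submod rann_submodule) x; rewrite /= [a * _]mulrBr.
by move/eqP; rewrite subr_eq0 => /eqP.
Qed.

Lemma lmul_rann_linear : linear lmul_rann.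
Proof.
move=> r; elim/quotmodW=> x; elim/quotmodW=> y.
by rewrite -qprojZ -qprojD !lmul_rann_proj [a * _]mulrDr [a * _]mulrA.
Qed.

HB.instance Definition _ :=
  GRing.isLinear.Build (R^c) rann_quot ((R^c)^o) *:%R lmul_rann lmul_rann_linear.

Lemma lmul_rann_inj : injective lmul_rann.
Proof.
elim/quotmodW=> x; elim/quotmodW=> y; rewrite !lmul_rann_proj => axy.
by apply/qprojP; rewrite /= [a * _]mulrBr axy subrr.
Qed.

End RightAnnihilator.

Lemma left_ideal_submodule (R : pzRingType) (I : R -> Prop) :
  left_ideal I -> submodule (I : R^o -> Prop).
Proof. by case=> I0 ID _ IM; split. Qed.

Section SimpleQuotient.
Variables (R : pzRingType) (I : R -> Prop) (hI : maximal_left_ideal I).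

Definition simple_submod := Submod (left_ideal_submodule (maximal_left_idealW hI)).
Definition simple_quot := quotmod simple_submod.

Lemma simple_quotP : simple_lmod simple_quot.
Proof.
have [_ I1 Imax] := hI.
split.
  by exists (qproj simple_submod 1); apply/eqP => /qproj_eq0.
move=> S [S0 SD SZ].
pose K x := S (qproj simple_submod x).
have hK : left_ideal K.
  split.
  - exact: S0.
  - by move=> x y Kx Ky; rewrite /K qprojD; apply: SD.
  - by move=> x Kx; rewrite /K -scaleN1r qprojZ; apply: SZ.
  - by move=> r x /(SZ r); rewrite -qprojZ.
have IK x : I x -> K x by move=> Ix; rewrite /K (iffRL (qproj_eq0 simple_submod x) Ix).
have [K1|K1] := classic (K 1).
  by right=> u; have := SZ (val u) _ K1; rewrite -qprojZ [_ *: _]mulr1 qproj_val.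
left=> u Su; rewrite -[u]qproj_val; apply/(qproj_eq0 simple_submod).
by apply: (Imax K hK K1 IK); rewrite /K qproj_val.
Qed.

End SimpleQuotient.

Section FlatSimpleQuotient.
Variables (R : pzRingType) (I : R -> Prop) (hI : maximal_left_ideal I) (a : R).

Local Notation Q := (simple_quot hI).
Local Notation Asub := (Submod (rann_submodule a)).
Local Notation Isub := (simple_submod hI).

Definition lmul_ideal (x : R) : Prop := exists2 y, I y & x = a * y.

(* The pairing (u, z) |-> a u z on (R / r.ann(a)) x (R / I) is balanced modulo a I. *)
Definition rann_pairing (p : rann_quot a * Q) : R := (lmul_rann p.1 : R) * val p.2.

Lemma rann_pairingE u z : rann_pairing (u, z) = (lmul_rann u : R) * val z.
Proof. by []. Qed.

Lemma lmul_ideal_relator g : lmul_ideal (fsum_eval rann_pairing (relator g)).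
Proof.
have [[I0 _ IN IM] _ _] := hI.
case: g => [u u' z | u z z' | u r z];
  rewrite /fsum_eval !big_cons big_nil addr0 mulr1z !mulrN1z !rann_pairingE.
- by exists 0; rewrite // linearD [_ * _]mulrDl addrACA !subrr addr0 mulr0.
- exists ((val u : R) * (val (z + z') - (val z + val z'))).
    exact: IM (val_quotmodD z z').
  by rewrite mulrA [in RHS]mulrBr mulrDr opprD addrA.
- exists (- ((val u : R) * (val (r *: z) - r * val z))).
    exact: IN (IM _ _ (val_quotmodZ r z)).
  by rewrite linearZ /= mulrN mulrA [in RHS]mulrBr !mulrA opprB addrC.
Qed.

Lemma lmul_ideal_tensor_zero s : tensor_zero s -> lmul_ideal (fsum_eval rann_pairing s).
Proof.
have [[I0 ID _ IM] _ _] := hI.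
have aI0 : lmul_ideal 0 by exists 0; rewrite ?mulr0.
have aID x y : lmul_ideal x -> lmul_ideal y -> lmul_ideal (x + y).
  by move=> [x' Ix' ->] [y' Iy' ->]; exists (x' + y'); rewrite ?mulrDr //; apply: ID.
have aIZ x n : lmul_ideal x -> lmul_ideal (x *~ n).
  by move=> [x' Ix' ->]; exists (x' *~ n); rewrite -?mulrzAr // -mulrzl; apply: IM.
move=> /(tensor_zero_eval rann_pairing) [gs ->].
by apply: (big_ind lmul_ideal) => // g _; apply/aIZ/lmul_ideal_relator.
Qed.

(* a (x) 1 = 1.a (x) 1 = 1 (x) a.1 = 0 in R (x) R/I, so by flatness 1 (x) 1 = 0 in
   R/r.ann(a) (x) R/I, and the balanced pairing maps 1 (x) 1 to a w with w = 1 mod I. *)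
Lemma flat_simple_quot_absorb : flat_lmod Q -> I a -> exists2 y, I y & a = a * y.
Proof.
move=> flatQ Ia; have [[_ ID IN _] _ _] := hI.
set u1 := qproj Asub 1; set z1 := qproj Isub 1.
have t0 : tensor_zero [:: (1%:Z, (u1, z1 : Q))].
  apply: (flatQ _ _ (@lmul_rann _ a) (@lmul_rann_inj _ a)).
  have -> : map_fsum (@lmul_rann _ a) [:: (1%:Z, (u1, z1 : Q))] =
      [:: (1%:Z, ((a : R^c) *: (1 : (R^c)^o), z1 : Q))].
    by rewrite /map_fsum /= lmul_rann_proj mulr1 [_ *: _]mul1r.
  apply: tensor_zero_annihilated.
  by rewrite -qprojZ; apply/qproj_eq0; rewrite /= [_ *: _]mulr1.
have [y Iy] := lmul_ideal_tensor_zero t0.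
rewrite /fsum_eval big_cons big_nil addr0 mulr1z rann_pairingE lmul_rann_proj mulr1 => ay.
have Iz1 := val_qprojB Isub 1.
exists (y - (val z1 - 1)); first exact: (ID _ _ Iy (IN _ Iz1)).
by rewrite mulrBr -ay mulrBr mulr1 opprB addrCA subrr addr0.
Qed.

End FlatSimpleQuotient.

Lemma left_SF_jacobson_sq (R : pzRingType) (a : R) : NJ_symmetric R -> left_SF R ->
  jacobson (a * a) -> jacobson a.
Proof.
move=> hNJ hSF Jaa I hI; apply: NNPP => Ia.
have hIa := maximal_left_ideal_colon hI Ia.
have [[_ ID _ _] I1 _] := hIa.
have [y Iay ay] := flat_simple_quot_absorb (hSF _ (simple_quotP hIa)) (Jaa I hI).
have Na : nilpotent_el (a * (1 - y) * 1).
  by exists 1%N; rewrite expr1 mulr1 mulrBr mulr1 -ay subrr.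
have := hNJ _ _ _ Na I hI; rewrite mulr1 => I1y.
by apply: I1; have := ID _ _ I1y Iay; rewrite subrK.
Qed.

Theorem theorem2p16 (R : pzRingType) :
  NJ_symmetric R -> (semiperiodic R \/ left_SF R) -> reduced_mod_jacobson R.
Proof.
move=> hNJ [hsp|hSF]; apply: reduced_mod_jacobsonP => a.
  exact: semiperiodic_jacobson_sq.
exact: left_SF_jacobson_sq.
Qed.
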